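(* Let $\Sigma=(X,U,F)$ be a system, $Q\subset X$ a controlled invariant set, and $(\mathcal{A},G)$ a quasi-invariant-partition of $Q$. Then \[h_{inv}(\mathcal{A},G)=\overline{w}^*(\mathcal{A},G),\] where $\overline{w}^*(\mathcal{A},G)$ is the maximum mean weight.
   Context: A system is a triple $\Sigma=(X,U,F)$ where $X,U$ are nonempty sets and $F:X\times U\rightrightarrows X$ is a set-valued map with $F(x,u)\neq\emptyset$ for all $(x,u)$; for $A\subset X$, $F(A,u)=\bigcup_{x\in A}F(x,u)$. $Q\subset X$ is controlled invariant if for every $x\in Q$ there is $u\in U$ with $F(x,u)\subset Q$. An invariant cover of $Q$ is a pair $(\mathcal{A},G)$ where $\mathcal{A}$ is a finite cover of $Q$ (by subsets of $Q$) and $G:\mathcal{A}\to U$ satisfies $F(A,G(A))\subset Q$ for all $A\in\mathcal{A}$. For $\mathcal{S}\subset\mathcal{A}^n$, $\alpha=\alpha(0)\cdots\alpha(n-1)\in\mathcal{S}$ and integer $0\le t<n-1$, let $P(\alpha|_{[0,t]})=\{A\in\mathcal{A}:\exists\hat\alpha\in\mathcal{S},\ \hat\alpha|_{[0,t]}=\alpha|_{[0,t]},\ A=\hat\alpha(t+1)\}$, and $P(\alpha|_{[0,n-1]})=P(\alpha)=\{\hat\alpha(0):\hat\alpha\in\mathcal{S}\}$. $\mathcal{S}$ is $(n,Q)$-spanning in $(\mathcal{A},G)$ if (1) the elements of $P(\alpha)$ cover $Q$, and (2) for every $\alpha\in\mathcal{S}$ and $0\le t<n-1$, $F(\alpha(t),G(\alpha(t)))\subset\bigcup_{A'\in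 P(\alpha|_{[0,t]})}A'$. Let $N(\mathcal{S})=\max_{\alpha\in\mathcal{S}}\prod_{t=0}^{n-1}\sharp P(\alpha|_{[0,t]})$, $r_{inv}(n,Q,\mathcal{A},G)=\min\{N(\mathcal{S}):\mathcal{S}\ (n,Q)\text{-spanning in }(\mathcal{A},G)\}$, and $h_{inv}(\mathcal{A},G)=\lim_{n\to\infty}\frac1n\log r_{inv}(n,Q,\mathcal{A},G)$ ($\log$ base $2$). For $A\in\mathcal{A}$: $D(A)=\{A'\in\mathcal{A}:F(A,G(A))\cap A'\neq\emptyset\}$ and $w(A)=\log\sharp D(A)$. A sequence $(A_i)$ in $\mathcal{A}$ is admissible if $F(A_i,G(A_i))\cap A_{i+1}\neq\emptyset$ for all consecutive indices. A finite sequence $c=(A_i)_{i=0}^{k-1}$ is an irreducible sequence of period $k$ if the infinite sequence $ccc\cdots$ is admissible and $A_i\neq A_j$ for $i\neq j$; its mean weight is $\overline{w}(c)=\frac1k\sum_{i=0}^{k-1}w(A_i)$, and $\overline{w}^*(\mathcal{A},G)=\max_c\overline{w}(c)$ over all irreducible periodic sequences $c$. An invariant cover $(\mathcal{A},G)$ is a quasi-invariant-partition of $Q$ if $A\setminus\bigcup_{B\in\mathcal{A},B\neq A}B\neq\emptyset$ for all $A\in\mathcal{A}$, and $F(A,G(A))\cap\big(B\setminus\bigcup_{C\in D(A),C\neq B}C\big)\neq\emptyset$ for all $A\in\mathcal{A}$ and $B\in D(A)$. *)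

From HB Require Import structures.
From mathcomp Require Import all_boot all_order all_algebra.
From mathcomp Require Import all_classical all_reals.
From mathcomp Require Import exp sequences topology normedtype.

Set Implicit Arguments.
Unset Strict Implicit.
Unset Printing Implicit Defensive.

Import Order.TTheory GRing.Theory Num.Theory.
Import numFieldNormedType.Exports.

Local Open Scope classical_set_scope.

Section InvEntropy.
Variables (X U : Type) (F : X -> U -> set X).

Definition Fimg (A : set X) (u : U) : set X :=
  [set y | exists x, A x /\ F x u y].

Definition is_system : Prop :=
  inhabited X /\ inhabited U /\ (forall x u, exists y, F x u y).

Definition controlled_invariant (Q : set X) : Prop :=
  forall x, Q x -> exists u, F x u `<=` Q.

(* A finite cover is represented by an injective family cov : I -> set X
   indexed by a finite type I; G : I -> U is the control assignment. *)
Variables (Q : set X) (I : finType) (cov : I -> set X) (G : I -> U).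

Definition invariant_cover : Prop :=
  injective cov /\
  (forall A, cov A `<=` Q) /\
  (Q `<=` [set x | exists A, cov A x]) /\
  (forall A, Fimg (cov A) (G A) `<=` Q).

Definition adm : rel I :=
  fun A B => `[< exists y, Fimg (cov A) (G A) y /\ cov B y >].

Definition Dset (A : I) : {set I} := finset (fun B => adm A B).

Definition quasi_invariant_partition : Prop :=
  invariant_cover /\
  (forall A, exists x, cov A x /\ forall B, B != A -> ~ cov B x) /\
  (forall A B, B \in Dset A ->
     exists y, Fimg (cov A) (G A) y /\ cov B y /\
       forall C, C \in Dset A -> C != B -> ~ cov C y).

Definition Pset (n : nat) (S : {set n.-tuple I}) (alpha : n.-tuple I)
    (t : 'I_n) : {set I} :=
  if t.+1 < n then
    finset (fun A => [exists beta in S,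
       (take t.+1 beta == take t.+1 alpha) && (onth beta t.+1 == Some A)])
  else finset (fun A => [exists beta in S, onth beta 0 == Some A]).

Definition P0set (n : nat) (S : {set n.-tuple I}) : {set I} :=
  finset (fun A => [exists beta in S, onth beta 0 == Some A]).

Definition spanning (n : nat) (S : {set n.-tuple I}) : Prop :=
  (Q `<=` [set x | exists2 A, A \in P0set S & cov A x]) /\
  (forall alpha, alpha \in S -> forall t : 'I_n, t.+1 < n ->
     Fimg (cov (tnth alpha t)) (G (tnth alpha t))
       `<=` [set x | exists2 A, A \in Pset S alpha t & cov A x]).

Definition spanningb (n : nat) (S : {set n.-tuple I}) : bool :=
  `[< spanning S >].

Definition Nval (n : nat) (S : {set n.-tuple I}) : nat :=
  \max_(alpha in S) \prod_(t < n) #|Pset S alpha t|.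

(* The full set
   [set: n.-tuple I] is always (n,Q)-spanning for an invariant cover, so
   N([set: _]) is a legitimate neutral element for this minimum. *)
Definition r_inv (n : nat) : nat :=
  \big[minn/Nval [set: n.-tuple I]]_(S : {set n.-tuple I} | spanningb S) Nval S.

Variable R : realType.
Local Open Scope ring_scope.

Definition log2 (x : R) : R := ln x / ln 2.

Definition weight (A : I) : R := log2 (#|Dset A|%:R).

(* irreducible periodic sequence: nonempty, pairwise distinct, c c c ... admissible *)
Definition irreducible_seq (c : seq I) : Prop :=
  c != [::] /\ uniq c /\ cycle adm c.

Definition mean_weight (c : seq I) : R :=
  (\sum_(A <- c) weight A) / (size c)%:R.

Definition is_max_mean_weight (w : R) : Prop :=
  (exists c, irreducible_seq c /\ mean_weight c = w) /\
  (forall c, irreducible_seq c -> mean_weight c <= w).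

Definition h_inv_is (w : R) : Prop :=
  (fun n : nat => (n%:R)^-1 * log2 (r_inv n)%:R) @ \oo --> w.

End InvEntropy.

From HB Require Import structures.
From mathcomp Require Import all_boot all_order all_algebra.
From mathcomp Require Import all_classical all_reals.
From mathcomp Require Import exp sequences topology normedtype.
From mathcomp Require Import lra zify.
Set Implicit Arguments.
Unset Strict Implicit.
Unset Printing Implicit Defensive.

Import Order.TTheory GRing.Theory Num.Theory.
Import numFieldNormedType.Exports.
Local Open Scope classical_set_scope.
Local Open Scope ring_scope.

(* Private points make the combinatorics of a quasi-invariant partition exact: a spanning set must
   contain every admissible sequence and must offer at least the successors D(A) after each cell,
   while the set of all admissible sequences is spanning with exactly these successors.  Hence
   log2 r_inv (n+1) is, up to the constant log2 #|I|, the largest total weight of an admissible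
   walk of length n.  Cutting simple cycles out of a walk bounds that weight by w* n plus the
   total weight of all cells, and repeating a cycle of maximal mean weight w* achieves
   w* n - O(1); so (1/n) log2 r_inv n tends to w*. *)

Lemma split_first_occurrence (T : eqType) (y : T) (s : seq T) : y \in s ->
  exists p r, s = p ++ y :: r /\ y \notin p.
Proof.
elim: s => // z s IH; rewrite in_cons; case: (eqVneq y z) => [-> _ | ne /= ys].
  by exists [::], s.
have [p [r [-> yNp]]] := IH ys; exists (z :: p), r; split => //.
by rewrite in_cons negb_or ne.
Qed.

Lemma not_uniq_split (T : eqType) (s : seq T) : ~~ uniq s ->
  exists p x c r, s = p ++ x :: c ++ x :: r /\ uniq (x :: c).
Proof.
elim: s => // a s IH /=; case uniq_s: (uniq s).
  rewrite andbT negbK => /split_first_occurrence [c [r [s_eq aNc]]].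
  exists [::], a, c, r; split; first by rewrite s_eq.
  by move: uniq_s; rewrite s_eq cat_uniq /= aNc => /andP [->].
move=> _; have [p [x [c [r [-> uxc]]]]] := IH (negbT uniq_s).
by exists (a :: p), x, c, r.
Qed.

Lemma exists_argmax_seq (T : eqType) (R : realType) (f : T -> R) (s : seq T) :
  s != [::] -> exists2 x, x \in s & forall y, y \in s -> f y <= f x.
Proof.
elim: s => // a s IH _; case: (eqVneq s [::]) => [-> | /IH [b bs fb]].
  by exists a => [|y]; rewrite ?mem_seq1 // => /eqP ->.
have [fab | fba] := lerP (f a) (f b).
  exists b => [|y]; first by rewrite in_cons bs orbT.
  by rewrite in_cons => /orP [/eqP -> // | /fb].
exists a => [|y]; first exact: mem_head.
by rewrite in_cons => /orP [/eqP -> // | /fb fyb]; exact: le_trans fyb (ltW fba).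
Qed.

Fixpoint seqs_upto (T : finType) (n : nat) : seq (seq T) :=
  if n is n'.+1 then [::] :: [seq a :: s | a <- enum T, s <- seqs_upto T n']
  else [:: [::]].

Lemma mem_seqs_upto (T : finType) n (s : seq T) : (size s <= n)%N -> s \in seqs_upto T n.
Proof.
elim: n s => [|n IH] [|a s] //= sz; rewrite ?mem_head // in_cons /=.
by apply: (allpairs_f (fun a s => a :: s)); rewrite ?mem_enum ?IH.
Qed.

Lemma big_take_tnth (R : Type) (idx : R) (op : Monoid.law idx) (T : Type) m
    (t : (m.+1).-tuple T) (g : T -> R) :
  \big[op/idx]_(x <- take m t) g x
    = \big[op/idx]_(i < m) g (tnth t (widen_ord (leqnSn m) i)).
Proof.
rewrite (big_nth (tnth t ord0)) size_takel ?size_tuple // big_mkord.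
by apply: eq_bigr => i _; rewrite nth_take // [in RHS](tnth_nth (tnth t ord0)).
Qed.

Lemma onth_nthE (T : Type) (s : seq T) x0 i : (i < size s)%N -> onth s i = Some (nth x0 s i).
Proof. by elim: s i => [|a s IH] [|i] //= /IH. Qed.

Lemma take_onth_succ (T : Type) (s s' : seq T) k :
  take k s' = take k s -> onth s' k = onth s k -> take k.+1 s' = take k.+1 s.
Proof.
elim: k s s' => [|k IH] [|a s] [|b s'] //=; first by move=> _ [->]; rewrite !take0.
by case=> -> /IH /[apply] ->.
Qed.

Section Walks.
Variables (T : finType) (e : rel T).

Definition walks n : {set n.-tuple T} := [set s : n.-tuple T | sorted e s].

Lemma sorted_cut_cycle p x c r :
  sorted e (p ++ x :: c ++ x :: r) -> sorted e (p ++ x :: r) && cycle e (x :: c).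
Proof.
case: p => [|a p] /=; rewrite !cat_path /= ?cat_path /= rcons_path.
  by case/and3P => -> -> ->.
by case/and5P => -> -> -> -> ->.
Qed.

Lemma sorted_nth_rel (s : seq T) x0 i : sorted e s -> (i.+1 < size s)%N ->
  e (nth x0 s i) (nth x0 s i.+1).
Proof. by case: s => [//|a s] /= /(pathP x0); apply. Qed.

Lemma sorted_flatten_nseq c q : cycle e c -> sorted e (flatten (nseq q c)).
Proof.
case: c => [|x c] /=; first by elim: q.
rewrite rcons_path => /andP [xc cx]; case: q => //= q.
elim: q => [|q IH] /=; first by rewrite cats0.
by rewrite cat_path xc /= cx.
Qed.

Section Total.
Hypothesis e_total : forall x, exists y, e x y.

Definition succ x := odflt x [pick y | e x y].

Lemma e_succ x : e x (succ x).
Proof.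
rewrite /succ; case: pickP => [y //|none].
by have [y xy] := e_total x; move: (none y); rewrite xy.
Qed.

Lemma path_traject_succ x k : path e x (traject succ (succ x) k).
Proof. by apply: sub_path (fpath_traject succ x k) => y z /eqP <-; exact: e_succ. Qed.

Lemma extend_walk n (p : seq T) : (0 < size p <= n)%N ->
  exists s : n.-tuple T, take (size p) s = p /\ (sorted e p -> sorted e s).
Proof.
case: p => [//|a p] /andP [_ le_pn].
set s := (a :: p) ++ traject succ (succ (last a p)) (n - size (a :: p)).
have size_s : size s == n by rewrite size_cat size_traject subnKC.
exists (Tuple size_s); split; first by rewrite /= take_size_cat.
by rewrite /= cat_path => ->; exact: path_traject_succ.
Qed.

Lemma extend_walk_at n (s : n.-tuple T) (t : 'I_n) y : (t.+1 < n)%N ->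
  exists s' : n.-tuple T, [/\ take t.+1 s' = take t.+1 s, onth s' t.+1 = Some y &
     (sorted e s -> e (tnth s t) y -> sorted e s')].
Proof.
move=> lt_tn; set p := rcons (take t.+1 s) y.
have size_take : size (take t.+1 s) = t.+1 by rewrite size_takel // size_tuple ltnW.
have size_p : size p = t.+2 by rewrite size_rcons size_take.
have [s' [take_s' sorted_s']] : exists s' : n.-tuple T,
    take (size p) s' = p /\ (sorted e p -> sorted e s') by apply: extend_walk; rewrite size_p.
exists s'; split.
- by rewrite -(take_takel _ (leqnSn t.+1)) -size_p take_s' /p -cats1 take_size_cat.
- rewrite (onth_nthE y) ?size_tuple //.
  by rewrite -(nth_take _ (ltnSn t.+1)) -size_p take_s' nth_rcons size_take ltnn eqxx.
- move=> sorted_s e_ty; apply: sorted_s'; rewrite /p.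
  have := take_sorted t.+1 sorted_s.
  rewrite (take_nth y) ?size_tuple ?(ltnW lt_tn) // (tnth_nth y) in e_ty *.
  case: (take t s) => [|a l] /=; first by rewrite e_ty.
  by rewrite !rcons_path last_rcons => /andP [-> ->].
Qed.

Lemma walk_from n x : (0 < n)%N -> exists2 s : n.-tuple T, sorted e s & onth s 0 = Some x.
Proof.
move=> n_gt0; have [s [take_s sorted_s]] := @extend_walk n [:: x] n_gt0.
by exists s; [exact: sorted_s | rewrite (onth_nthE x) ?size_tuple // -(nth_take _ (ltnSn 0)) take_s].
Qed.

Lemma exists_simple_cycle (x0 : T) : exists c, c != [::] /\ uniq c /\ cycle e c.
Proof.
set s := traject succ x0 #|T|.+1.
have sorted_s : sorted e s by rewrite /s trajectS /=; exact: path_traject_succ.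
have : ~~ uniq s.
  apply/negP => /card_uniqP; rewrite size_traject => card_s.
  by have := max_card (mem s); rewrite card_s ltnn.
case/not_uniq_split => p [x [c [r [s_eq uniq_xc]]]].
rewrite s_eq in sorted_s; case/andP: (sorted_cut_cycle sorted_s) => _ cycle_xc.
by exists (x :: c).
Qed.

Lemma exists_max_simple_cycle (R : realType) (g : seq T -> R) (x0 : T) :
  exists c, (c != [::] /\ uniq c /\ cycle e c) /\
    forall c', c' != [::] /\ uniq c' /\ cycle e c' -> g c' <= g c.
Proof.
pose simple c := `[< c != [::] /\ uniq c /\ cycle e c >].
set L := [seq c <- seqs_upto T #|T| | simple c].
have memL c : c != [::] /\ uniq c /\ cycle e c -> c \in L.
  move=> simple_c; rewrite mem_filter /simple asboolT //=; apply: mem_seqs_upto.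
  by case: simple_c => _ [/card_uniqP <- _]; exact: max_card.
have [c0 /memL c0L] := exists_simple_cycle x0.
have [|c cL max_c] := @exists_argmax_seq _ _ g L; first by apply: contraTneq c0L => ->.
exists c; split; last by move=> c' /memL; exact: max_c.
by move: cL; rewrite mem_filter => /andP [/asboolP].
Qed.

End Total.

Section Weighted.
Variables (R : realType) (f : T -> R).
Hypothesis f_ge0 : forall x, 0 <= f x.

Lemma sum_uniq_le_sum (s : seq T) : uniq s -> \sum_(x <- s) f x <= \sum_x f x.
Proof.
move=> uniq_s; rewrite big_uniq // [leRHS](bigID (mem s)) /= lerDl.
by apply: sumr_ge0 => x _.
Qed.

Lemma walk_sum_le (lam : R) (s : seq T) : 0 <= lam ->
  (forall c, c != [::] /\ uniq c /\ cycle e c -> \sum_(x <- c) f x <= lam * (size c)%:R) ->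
  sorted e s -> \sum_(x <- s) f x <= lam * (size s)%:R + \sum_x f x.
Proof.
move=> lam_ge0 cycle_le; have [n] := ubnP (size s); elim: n s => // n IH s.
rewrite ltnS => size_s sorted_s; case uniq_s: (uniq s).
  have := sum_uniq_le_sum uniq_s; have : 0 <= lam * (size s)%:R by rewrite mulr_ge0.
  lra.
have [p [x [c [r [s_eq uniq_xc]]]]] := not_uniq_split (negbT uniq_s).
rewrite s_eq in sorted_s; case/andP: (sorted_cut_cycle sorted_s) => sorted_pxr cycle_xc.
have size_split : size s = (size (p ++ x :: r) + size (x :: c))%N.
  by rewrite s_eq !size_cat /= size_cat /=; lia.
have sum_split : \sum_(y <- s) f y = \sum_(y <- p ++ x :: r) f y + \sum_(y <- x :: c) f y.
  by rewrite s_eq !(big_cat, big_cons) /=; lra.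
have lt_pxr : (size (p ++ x :: r) < n)%N by move: size_s; rewrite size_split /=; lia.
have := IH _ lt_pxr sorted_pxr; have := cycle_le (x :: c) (conj isT (conj uniq_xc cycle_xc)).
rewrite sum_split size_split natrD mulrDr; lra.
Qed.

Lemma sum_flatten_nseq (c : seq T) q :
  \sum_(x <- flatten (nseq q c)) f x = q%:R * \sum_(x <- c) f x.
Proof. by rewrite big_flatten big_nseq iter_addr_0 mulr_natl. Qed.

Lemma repeat_cycle_walk (c : seq T) m : c != [::] -> cycle e c ->
  exists2 s : (m.+1).-tuple T, sorted e s &
    ((m.+1)%:R - (size c)%:R) * ((\sum_(x <- c) f x) / (size c)%:R)
      <= \sum_(x <- take m s) f x.
Proof.
move=> c_nz cycle_c; set k := size c; have k_gt0 : (0 < k)%N by rewrite lt0n size_eq0.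
set q := (m %/ k)%N; set s := flatten (nseq m.+1 c).
have size_nseq n : size (flatten (nseq n c)) = (k * n)%N.
  by rewrite size_flatten /shape map_nseq sumn_nseq mulnC.
have size_s : size (take m.+1 s) == m.+1 by rewrite size_takel // size_nseq leq_pmull.
exists (Tuple size_s); first exact/take_sorted/sorted_flatten_nseq.
have le_qk_m : (k * q <= m)%N by rewrite mulnC leq_divM.
have s_split : s = flatten (nseq q c) ++ flatten (nseq (m.+1 - q) c).
  by rewrite -flatten_cat -nseqD subnKC // (leq_trans (leq_div _ _)).
rewrite /= take_takel // s_split take_cat size_nseq ltnNge le_qk_m big_cat /=.
rewrite sum_flatten_nseq -[leLHS]addr0 lerD //; last by rewrite sumr_ge0.
have mean_ge0 : 0 <= (\sum_(x <- c) f x) / k%:R by rewrite divr_ge0 ?sumr_ge0.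
have le_m1_qk : (m.+1 <= q * k + k)%N.
  by rewrite /q {1}(divn_eq m k) -addnS leq_add2l ltn_pmod.
apply: (@le_trans _ _ ((q * k)%:R * ((\sum_(x <- c) f x) / k%:R))).
  by rewrite ler_wpM2r // lerBlDr -natrD ler_nat.
by rewrite natrM -mulrA [k%:R * _]mulrC divfK // pnatr_eq0 -lt0n.
Qed.

End Weighted.
End Walks.

Section Log2.
Variable R : realType.

Lemma ln2_gt0 : 0 < ln (2 : R).
Proof. by apply: ln_gt0; rewrite ltr1n. Qed.

Lemma log2_ge0 (x : R) : 1 <= x -> 0 <= log2 x.
Proof. by move=> x_ge1; apply: divr_ge0; [exact: ln_ge0 | exact/ltW/ln2_gt0]. Qed.

Lemma log2M (x y : R) : 0 < x -> 0 < y -> log2 (x * y) = log2 x + log2 y.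
Proof. by move=> x_gt0 y_gt0; rewrite /log2 lnM ?posrE // mulrDl. Qed.

Lemma ler_log2 (x y : R) : 0 < x -> x <= y -> log2 x <= log2 y.
Proof.
move=> x_gt0 le_xy; rewrite ler_pM2r ?invr_gt0 ?ln2_gt0 //.
by rewrite ler_ln ?posrE // (lt_le_trans x_gt0 le_xy).
Qed.

Lemma log2_prod (T : Type) (s : seq T) (g : T -> nat) : (forall x, 0 < g x)%N ->
  log2 (\prod_(x <- s) g x)%N%:R = \sum_(x <- s) log2 (g x)%:R :> R.
Proof.
move=> g_gt0; elim: s => [|a s IH]; first by rewrite !big_nil /log2 ln1 mul0r.
by rewrite !big_cons natrM log2M ?IH // ltr0n ?prodn_gt0.
Qed.

End Log2.

Lemma cvg_avg_of_bounded_deviation (R : realType) (u : nat -> R) (lam K : R) :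
  (forall n, lam * n.+1%:R - K <= u n.+1 <= lam * n.+1%:R + K) ->
  (fun n => n%:R^-1 * u n) @ \oo --> lam.
Proof.
move=> u_near; rewrite -cvg_shiftS /=.
have K_harmonic : (fun n => K * harmonic n) @ \oo --> (0 : R).
  by rewrite -(mulr0 K); apply: cvgMl_tmp; exact: cvg_harmonic.
apply: (@squeeze_cvgr _ _ _ _ (fun n => lam - K * harmonic n) (fun n => lam + K * harmonic n)).
- apply: nearW => n /=; have /andP [u_ge u_le] := u_near n.
  set h := n.+1%:R^-1; have h_gt0 : 0 < h by rewrite invr_gt0 ltr0n.
  have h_lam : h * (lam * n.+1%:R) = lam by rewrite mulrCA mulVf ?mulr1 ?pnatr_eq0.
  have lo : 0 <= h * (u n.+1 - (lam * n.+1%:R - K)) by rewrite mulr_ge0 ?subr_ge0 // ltW.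
  have hi : 0 <= h * (lam * n.+1%:R + K - u n.+1) by rewrite mulr_ge0 ?subr_ge0 // ltW.
  apply/andP; split; lra.
- by rewrite -[X in _ --> X]subr0; apply: cvgB => //; exact: cvg_cst.
- by rewrite -[X in _ --> X]addr0; apply: cvgD => //; exact: cvg_cst.
Qed.

Section QuasiInvariantPartition.
Variables (X U : Type) (F : X -> U -> set X) (Q : set X) (I : finType)
  (cov : I -> set X) (G : I -> U).
Hypothesis F_nonempty : forall x u, exists y, F x u y.
Hypothesis qip : quasi_invariant_partition F Q cov G.

Local Notation adm := (adm F cov G).
Local Notation D := (Dset F cov G).
Local Notation spanning := (spanning F Q cov G).

Lemma admP A B : reflect (exists y, Fimg F (cov A) (G A) y /\ cov B y) (adm A B).
Proof. exact: asboolP. Qed.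

Lemma adm_total A : exists B, adm A B.
Proof.
case: qip => [[_ [_ [Q_covered FQ]]] [private _]].
have [x [Ax _]] := private A; have [y Fxy] := F_nonempty x (G A).
have Fy : Fimg F (cov A) (G A) y by exists x.
by have [B By] := Q_covered y (FQ A y Fy); exists B; apply/admP; exists y.
Qed.

Lemma Dset_gt0 A : (0 < #|D A|)%N.
Proof. by have [B AB] := adm_total A; apply/card_gt0P; exists B; rewrite inE. Qed.

Lemma spanning_of_extensions n (S : {set n.-tuple I}) :
  (forall A, exists2 s, s \in S & onth s 0 = Some A) ->
  (forall s, s \in S -> forall t : 'I_n, (t.+1 < n)%N -> forall B, adm (tnth s t) B ->
    exists2 s', s' \in S & take t.+1 s' = take t.+1 s /\ onth s' t.+1 = Some B) ->
  spanning S.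
Proof.
case: qip => [[_ [_ [Q_covered FQ]]] _] heads extensions; split.
- move=> x /Q_covered [A Ax]; exists A => //.
  by have [s sS s0] := heads A; rewrite inE; apply/exists_inP; exists s; rewrite // s0.
- move=> s sS t lt_tn y Fy; have [B By] := Q_covered y (FQ _ y Fy); exists B => //.
  have [|s' s'S [take_s' s't]] := extensions s sS t lt_tn B; first by apply/admP; exists y.
  by rewrite /Pset lt_tn inE; apply/exists_inP; exists s'; rewrite // take_s' s't !eqxx.
Qed.

Lemma spanning_walks n : (0 < n)%N -> spanning (walks adm n).
Proof.
move=> n_gt0; apply: spanning_of_extensions => [A | s].
  by have [s sorted_s s0] := walk_from adm_total A n_gt0; exists s; rewrite ?inE.
rewrite inE => sorted_s t lt_tn B sB.
have [s' [take_s' s't sorted_s']] := extend_walk_at adm_total s B lt_tn.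
by exists s'; [rewrite inE; exact: sorted_s' | split].
Qed.

Lemma spanning_setT n : (0 < n)%N -> spanning [set: n.-tuple I].
Proof.
move=> n_gt0; apply: spanning_of_extensions => [A | s _ t lt_tn B _].
  by have [s _ s0] := walk_from adm_total A n_gt0; exists s.
by have [s' [take_s' s't _]] := extend_walk_at adm_total s B lt_tn; exists s'.
Qed.

Lemma mem_P0set n (S : {set n.-tuple I}) A : spanning S -> A \in P0set S.
Proof.
case: qip => [[_ [covQ _]] [private _]] [S_covers _].
have [x [Ax onlyA]] := private A; have [B BS Bx] := S_covers x (covQ A x Ax).
suff <- : B = A by [].
by apply/eqP; apply: contraT => /onlyA.
Qed.

Lemma Dset_sub_Pset n (S : {set n.-tuple I}) s (t : 'I_n) : spanning S -> s \in S ->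
  (t.+1 < n)%N -> D (tnth s t) \subset Pset S s t.
Proof.
case=> _ S_extends sS lt_tn; apply/fintype.subsetP => B BD.
case: qip => _ [_ private]; have [y [Fy [By onlyB]]] := private _ _ BD.
have [A AP Ay] := S_extends s sS t lt_tn y Fy.
have AD : A \in D (tnth s t) by rewrite inE; apply/admP; exists y.
by case: (eqVneq A B) => [<- // | neAB]; case: (onlyB A AD neAB).
Qed.

Lemma walk_in_spanning m (S : {set (m.+1).-tuple I}) (s : (m.+1).-tuple I) :
  spanning S -> sorted adm s -> s \in S.
Proof.
move=> span_S sorted_s; set a := tnth s ord0.
suff /(_ m (ltnSn m)) [s' s'S] : forall k, (k < m.+1)%N ->
    exists2 s', s' \in S & take k.+1 s' = take k.+1 s.
  by rewrite !take_oversize ?size_tuple // => /val_inj <-.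
elim=> [_ | k IH lt_km].
  have := mem_P0set a span_S; rewrite inE => /exists_inP [s' s'S /eqP s'0].
  exists s' => //; apply: take_onth_succ; rewrite ?take0 // s'0.
  exact/esym/(tnth_onth a s ord0).
have [s' s'S take_s'] := IH (ltnW lt_km); pose t : 'I_m.+1 := Ordinal (ltnW lt_km).
have s't : tnth s' t = nth a s k.
  by rewrite (tnth_nth a) /= -(nth_take _ (ltnSn k)) take_s' nth_take.
have : nth a s k.+1 \in D (tnth s' t).
  by rewrite inE s't sorted_nth_rel ?size_tuple.
move/(fintype.subsetP (Dset_sub_Pset (t := t) span_S s'S lt_km)).
rewrite /Pset lt_km inE => /exists_inP [s'' s''S /andP [/eqP take_s'' /eqP s''k]].
exists s'' => //; apply: take_onth_succ; first by rewrite take_s'' take_s'.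
by rewrite s''k (onth_nthE a) ?size_tuple.
Qed.

Lemma Nval_ge_walk m (S : {set (m.+1).-tuple I}) (s : (m.+1).-tuple I) :
  spanning S -> sorted adm s -> (\prod_(A <- take m s) #|D A| <= Nval S)%N.
Proof.
move=> span_S sorted_s; have sS := walk_in_spanning span_S sorted_s.
apply: leq_trans (leq_bigmax_cond _ sS); rewrite big_ord_recr /= big_take_tnth.
have last_gt0 : (0 < #|Pset S s ord_max|)%N.
  apply/card_gt0P; exists (tnth s ord0); rewrite /Pset ltnn inE.
  by apply/exists_inP; exists s => //; apply/eqP/(tnth_onth _ s ord0).
rewrite -[leqLHS]muln1 leq_mul //; apply: leq_prod => i _.
by apply/subset_leq_card/Dset_sub_Pset; rewrite //= ltnS.
Qed.

Lemma Nval_walks_le m (s : (m.+1).-tuple I) : s \in walks adm m.+1 ->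
  (\prod_(t < m.+1) #|Pset (walks adm m.+1) s t|
     <= \prod_(A <- take m s) #|D A| * #|I|)%N.
Proof.
move=> sW; rewrite big_ord_recr /= big_take_tnth leq_mul ?max_card //.
apply: leq_prod => i _; apply/subset_leq_card/fintype.subsetP => A.
have lt_i : ((widen_ord (leqnSn m) i).+1 < m.+1)%N by rewrite /= ltnS.
rewrite /Pset lt_i inE => /exists_inP [s' s'W /andP [/eqP take_s' /eqP s'A]].
set a := tnth s ord0; rewrite inE in s'W; rewrite inE (tnth_nth a) /=.
rewrite -(nth_take _ (ltnSn i)) -take_s' nth_take // -(onth_nth a _ _ _ s'A).
by rewrite sorted_nth_rel ?size_tuple.
Qed.

Lemma r_inv_ge_walk m (s : (m.+1).-tuple I) : sorted adm s ->
  (\prod_(A <- take m s) #|D A| <= r_inv F Q cov G m.+1)%N.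
Proof.
move=> sorted_s; rewrite /r_inv -minEnat -leEnat.
apply: le_bigmin => [|S /asboolP span_S]; last exact: Nval_ge_walk.
exact/Nval_ge_walk/sorted_s/spanning_setT.
Qed.

Lemma r_inv_le_walk m (A0 : I) : exists2 s : (m.+1).-tuple I, sorted adm s &
  (r_inv F Q cov G m.+1 <= \prod_(A <- take m s) #|D A| * #|I|)%N.
Proof.
have r_le : (r_inv F Q cov G m.+1 <= Nval (walks adm m.+1))%N.
  by rewrite /r_inv -minEnat -leEnat; apply: bigmin_le_cond; exact/asboolP/spanning_walks.
have [s0 sorted_s0 _] := walk_from adm_total A0 (ltn0Sn m).
have walks_gt0 : (0 < #|walks adm m.+1|)%N by apply/card_gt0P; exists s0; rewrite inE.
have [s sW Nval_s] := eq_bigmax_cond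
  (fun s => \prod_(t < m.+1) #|Pset (walks adm m.+1) s t|)%N walks_gt0.
exists s; first by rewrite inE in sW.
by apply: leq_trans r_le _; rewrite /Nval Nval_s; exact: Nval_walks_le.
Qed.

Section Weights.
Variable R : realType.
Local Notation w := (weight F cov G R).

Lemma weight_ge0 A : 0 <= w A.
Proof. by apply: log2_ge0; rewrite ler1n Dset_gt0. Qed.

Lemma log2_prod_Dset (s : seq I) : log2 (\prod_(A <- s) #|D A|)%N%:R = \sum_(A <- s) w A.
Proof. exact: log2_prod Dset_gt0. Qed.

Lemma log2_r_inv_ge c n : irreducible_seq F cov G c ->
  ((n.+1)%:R - (size c)%:R) * mean_weight F cov G R c <= log2 (r_inv F Q cov G n.+1)%:R.
Proof.
case=> c_nz [_ cycle_c]; have [s sorted_s] := repeat_cycle_walk weight_ge0 n c_nz cycle_c.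
move/le_trans; apply; rewrite -log2_prod_Dset.
apply: ler_log2; first by rewrite ltr0n prodn_gt0 // => A; exact: Dset_gt0.
by rewrite ler_nat r_inv_ge_walk.
Qed.

Lemma log2_r_inv_le (A0 : I) (lam : R) n : 0 <= lam ->
  (forall c, irreducible_seq F cov G c -> mean_weight F cov G R c <= lam) ->
  log2 (r_inv F Q cov G n.+1)%:R <= lam * n%:R + (\sum_A w A + log2 #|I|%:R).
Proof.
move=> lam_ge0 max_lam; have [s sorted_s r_le] := r_inv_le_walk n A0.
have prod_gt0 : (0 < \prod_(A <- take n s) #|D A|)%N.
  by rewrite prodn_gt0 // => A; exact: Dset_gt0.
have card_gt0 : (0 < #|I|)%N by apply/card_gt0P; exists A0.
have r_gt0 := leq_trans prod_gt0 (r_inv_ge_walk sorted_s).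
have cycle_le c : c != [::] /\ uniq c /\ cycle adm c -> \sum_(A <- c) w A <= lam * (size c)%:R.
  move=> irr_c; have := max_lam c irr_c.
  by case: irr_c => c_nz _; rewrite /mean_weight ler_pdivrMr // ltr0n lt0n size_eq0.
apply: le_trans (_ : _ <= log2 (\prod_(A <- take n s) #|D A| * #|I|)%N%:R) _.
  by apply: ler_log2; rewrite ?ltr0n ?ler_nat.
rewrite natrM log2M ?ltr0n // log2_prod_Dset.
have := walk_sum_le weight_ge0 lam_ge0 cycle_le (take_sorted n sorted_s).
by rewrite size_takel ?size_tuple //; lra.
Qed.

End Weights.
End QuasiInvariantPartition.

Theorem theorem3p2 (R : realType) (X U : Type) (F : X -> U -> set X)
  (Q : set X) (I : finType) (cov : I -> set X) (G : I -> U) :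
  is_system F ->
  controlled_invariant F Q ->
  Q !=set0 ->
  quasi_invariant_partition F Q cov G ->
  exists w : R, is_max_mean_weight F cov G w /\ h_inv_is F Q cov G w.
Proof.
move=> [_ [_ F_nonempty]] _ [x Qx] qip.
have [A0 _] : exists A, cov A x by case: qip => [[_ [_ [Q_covered _]]] _]; exact: Q_covered.
have w_ge0 := weight_ge0 F_nonempty qip R.
have [c [irr_c max_c]] :=
  exists_max_simple_cycle (adm_total F_nonempty qip) (mean_weight F cov G R) A0.
set lam := mean_weight F cov G R c.
have lam_ge0 : 0 <= lam by rewrite divr_ge0 ?sumr_ge0.
exists lam; split; first by split; [exists c | exact: max_c].
set C := \sum_A weight F cov G R A + log2 #|I|%:R.
have C_ge0 : 0 <= C.
  by rewrite addr_ge0 ?sumr_ge0 ?log2_ge0 // ler1n; apply/card_gt0P; exists A0.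
apply: (@cvg_avg_of_bounded_deviation _ _ lam ((size c)%:R * lam + C)) => n.
have lo : (n.+1%:R - (size c)%:R) * lam <= log2 (r_inv F Q cov G n.+1)%:R.
  exact: log2_r_inv_ge.
have hi : log2 (r_inv F Q cov G n.+1)%:R <= lam * n%:R + C.
  exact: log2_r_inv_le.
have size_lam_ge0 : 0 <= (size c)%:R * lam by rewrite mulr_ge0.
by rewrite -natr1 in lo *; apply/andP; split; lra.
Qed.
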